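(* Let $H$ be a (complex) Hilbert space, $D\subset H$ a dense subspace, and $\mathcal{A},\mathcal{B}$ linear self-adjoint operators with domain $D$ (i.e. $\mathcal{A},\mathcal{B}:D\subset H\to H$). For $\alpha\in\mathbb{R}$ define $$\mathcal{T}=\begin{pmatrix}\mathcal{A}&\alpha\mathcal{B}\\-\alpha\mathcal{A}&\mathcal{B}\end{pmatrix}:D\times D\subset H\times H\to H\times H.$$ Then $\sigma(\mathcal{T})\cap i\mathbb{R}\subset\{0\}$. *)

From HB Require Import structures.
From mathcomp Require Import all_boot all_order all_algebra.
From mathcomp Require Import complex.
From mathcomp Require Import reals.
Set Implicit Arguments. Unset Strict Implicit. Unset Printing Implicit Defensive.
Import Order.TTheory GRing.Theory Num.Theory.
Local Open Scope ring_scope.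

Section Hilbert.
Variable R : realType.
Local Notation C := (R[i]).

Definition ipnorm (W : lmodType C) (ip : W -> W -> C) (x : W) : R :=
  Num.sqrt (complex.Re (ip x x)).

Definition inner_product (W : lmodType C) (ip : W -> W -> C) : Prop :=
  [/\ forall (a : C) (x y z : W), ip (a *: x + y) z = a * ip x z + ip y z,
      forall x y : W, ip y x = conjc (ip x y),
      forall x : W, 0 <= ip x x
    & forall x : W, ip x x = 0 -> x = 0].

Definition hilbert_space (W : lmodType C) (ip : W -> W -> C) : Prop :=
  inner_product ip /\
  forall u : nat -> W,
    (forall e : R, 0 < e -> exists N, forall m n, (N <= m)%N -> (N <= n)%N ->
        ipnorm ip (u m - u n) < e) ->
    exists l : W, forall e : R, 0 < e -> exists N, forall n, (N <= n)%N ->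
        ipnorm ip (u n - l) < e.

Definition subspace (W : lmodType C) (D : W -> Prop) : Prop :=
  D 0 /\ forall (a : C) (x y : W), D x -> D y -> D (a *: x + y).

Definition dense (W : lmodType C) (ip : W -> W -> C) (D : W -> Prop) : Prop :=
  forall (x : W) (e : R), 0 < e -> exists2 d, D d & ipnorm ip (x - d) < e.

Definition linear_on (W : lmodType C) (D : W -> Prop) (A : W -> W) : Prop :=
  forall (a : C) (x y : W), D x -> D y -> A (a *: x + y) = a *: A x + A y.

Definition adj_dom (W : lmodType C) (ip : W -> W -> C) (D : W -> Prop)
  (A : W -> W) (y : W) : Prop :=
  exists z : W, forall x, D x -> ip (A x) y = ip x z.

(* A : D subset W -> W is linear and self-adjoint: A = A^*, i.e.
   dom A^* = D and A^* y = A y on D. *)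
Definition self_adjoint (W : lmodType C) (ip : W -> W -> C) (D : W -> Prop)
  (A : W -> W) : Prop :=
  [/\ linear_on D A,
      forall y, D y <-> adj_dom ip D A y
    & forall y z, D y -> (forall x, D x -> ip (A x) y = ip x z) -> A y = z].

Definition resolvent (W : lmodType C) (ip : W -> W -> C) (D : W -> Prop)
  (S : W -> W) (lam : C) : Prop :=
  exists Rs : W -> W,
    [/\ forall f, D (Rs f) /\ S (Rs f) - lam *: Rs f = f,
        forall u, D u -> Rs (S u - lam *: u) = u
      & exists c : R, forall f, ipnorm ip (Rs f) <= c * ipnorm ip f].

Definition spectrum (W : lmodType C) (ip : W -> W -> C) (D : W -> Prop)
  (S : W -> W) (lam : C) : Prop := ~ resolvent ip D S lam.

Definition ip_prod (V : lmodType C) (ip : V -> V -> C) (u v : V * V) : C :=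
  ip u.1 v.1 + ip u.2 v.2.

Definition dom_prod (V : lmodType C) (D : V -> Prop) (u : V * V) : Prop :=
  D u.1 /\ D u.2.

Definition Tblock (V : lmodType C) (A B : V -> V) (alpha : R) (u : V * V)
  : V * V :=
  (A u.1 + (alpha%:C)%C *: B u.2, - ((alpha%:C)%C *: A u.1) + B u.2).

End Hilbert.

(* Write lam = i mu with mu <> 0.  Pairing (T - lam) u with the twisted vector
   (u1 + alpha u2, u2 - alpha u1) cancels the cross terms and makes the
   contributions of A and B real, so its imaginary part is -mu |u|^2, while the
   twisted vector has norm^2 (1 + alpha^2) |u|^2; Cauchy-Schwarz then gives
   mu^2 |u|^2 <= (1 + alpha^2) |(T - lam) u|^2.  T - lam is closed, since
   T = [[1, alpha], [-alpha, 1]] diag(A, B) with an invertible first factor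
   and self-adjoint operators are closed; and its range is dense, since a
   vector g orthogonal to it satisfies A (g1 - alpha g2) = conj lam g1 and
   B (alpha g1 + g2) = conj lam g2, which the reality of the quadratic forms of
   A and B turns into mu |g|^2 = 0.  A closed operator that is bounded below
   and has dense range is onto: a minimizing sequence for the distance from f
   to the range is Cauchy by the parallelogram law, and the residual of its
   limit is orthogonal to the range. *)

From HB Require Import structures.
From mathcomp Require Import all_boot all_order all_algebra.
From mathcomp Require Import complex.
From mathcomp Require Import reals boolp classical_sets.
From mathcomp Require Import ring lra.
Import Order.TTheory GRing.Theory Num.Theory.
Set Implicit Arguments. Unset Strict Implicit. Unset Printing Implicit Defensive.
Local Open Scope ring_scope.
Local Open Scope complex_scope.
Local Notation Re := complex.Re.
Local Notation Im := complex.Im.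

Lemma le_of_quadratic_ge0 (R : realFieldType) (a q c : R) : 0 <= q -> 0 <= c ->
  (forall s, 0 <= a - 2 * s * q + s ^+ 2 * q * c) -> q <= a * c.
Proof.
move=> q0 c0 H; have [c_eq0|c_neq0] := eqVneq c 0.
  rewrite c_eq0 mulr0; have [->|q_neq0] := eqVneq q 0; first by [].
  have := H ((a + 1) / (2 * q)); rewrite c_eq0 mulr0 addr0.
  have -> : 2 * ((a + 1) / (2 * q)) * q = a + 1 by field.
  lra.
have := H c^-1.
have -> : a - 2 * c^-1 * q + c^-1 ^+ 2 * q * c = (a * c - q) / c by field.
by rewrite pmulr_lge0 ?invr_gt0 ?lt_def ?c_neq0 // subr_ge0.
Qed.

Section ComplexSquaredModulus.
Variable R : realType.
Implicit Types x y : R[i].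

Definition normc2 x : R := Re x ^+ 2 + Im x ^+ 2.

Lemma normc2_ge0 x : 0 <= normc2 x.
Proof. by case: x => a b; rewrite /normc2 /= addr_ge0 ?sqr_ge0. Qed.

Lemma normc2_eq0 x : normc2 x = 0 -> x = 0.
Proof.
case: x => a b; rewrite /normc2 /= => h.
have a0 : a = 0 by nra.
have b0 : b = 0 by nra.
by rewrite a0 b0.
Qed.

Lemma normc2N x : normc2 (- x) = normc2 x.
Proof. by case: x => a b; rewrite /normc2 /= !sqrrN. Qed.

Lemma normc2J x : normc2 (conjc x) = normc2 x.
Proof. by case: x => a b; rewrite /normc2 /= sqrrN. Qed.

Lemma normc2D_le x y : normc2 (x + y) <= 2 * normc2 x + 2 * normc2 y.
Proof.
case: x => a b; case: y => c d; rewrite /normc2 /=.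
have := sqr_ge0 (a - c); have := sqr_ge0 (b - d); nra.
Qed.

Lemma sqr_Im_le_normc2 x : Im x ^+ 2 <= normc2 x.
Proof. by rewrite /normc2 lerDr sqr_ge0. Qed.

(* Stated with [conjc] itself: the generic [rmorphD] etc. leave a structure
   coercion around [conjc] that later rewrites no longer match. *)
Lemma conjcD x y : conjc (x + y) = conjc x + conjc y. Proof. exact: rmorphD. Qed.
Lemma conjcM x y : conjc (x * y) = conjc x * conjc y. Proof. exact: rmorphM. Qed.
Lemma conjcN x : conjc (- x) = - conjc x. Proof. exact: rmorphN. Qed.

Lemma ReD x y : Re (x + y) = Re x + Re y.
Proof. by case: x; case: y. Qed.

End ComplexSquaredModulus.

Definition ipnorm2 (R : realType) (W : lmodType R[i]) (p : W -> W -> R[i])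
  (x : W) : R := Re (p x x).

Section InnerProduct.
Variables (R : realType) (W : lmodType R[i]) (p : W -> W -> R[i]).
Hypothesis ipP : inner_product p.
Local Notation N := (ipnorm2 p).
Implicit Types x y z : W.

Lemma ipDl x y z : p (x + y) z = p x z + p y z.
Proof. by case: ipP => lin _ _ _; rewrite -{1}[x]scale1r lin mul1r. Qed.

Lemma ip0l z : p 0 z = 0.
Proof.
have h := ipDl 0 0 z; rewrite addr0 in h.
by apply: (addrI (p 0 z)); rewrite addr0 -h.
Qed.

Lemma ipZl a x z : p (a *: x) z = a * p x z.
Proof. by case: ipP => lin _ _ _; rewrite -[a *: x]addr0 lin ip0l addr0. Qed.

Lemma ipNl x z : p (- x) z = - p x z.
Proof. by rewrite -scaleN1r ipZl mulN1r. Qed.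

Lemma ipBl x y z : p (x - y) z = p x z - p y z.
Proof. by rewrite ipDl ipNl. Qed.

Lemma ipC x y : p y x = conjc (p x y).
Proof. by case: ipP => _ h _ _; apply: h. Qed.

Lemma ipDr x y z : p z (x + y) = p z x + p z y.
Proof. by rewrite ipC ipDl conjcD -!ipC. Qed.

Lemma ipZr a x z : p z (a *: x) = conjc a * p z x.
Proof. by rewrite ipC ipZl conjcM -!ipC. Qed.

Lemma ipNr x z : p z (- x) = - p z x.
Proof. by rewrite ipC ipNl conjcN -!ipC. Qed.

Lemma ipBr x y z : p z (x - y) = p z x - p z y.
Proof. by rewrite ipDr ipNr. Qed.

Lemma ip0r z : p z 0 = 0.
Proof. by rewrite ipC ip0l conjc0. Qed.

Definition ipE := (ipDl, ipZl, ipNl, ipDr, ipZr, ipNr, ip0l, ip0r).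

Lemma ipnorm2_ge0 x : 0 <= N x.
Proof. by case: ipP => _ _ + _ => /(_ x); rewrite lecE => /andP[]. Qed.

Lemma ip_diag x : p x x = (N x)%:C.
Proof.
case: ipP => _ _ + _ => /(_ x); rewrite lecE /ipnorm2.
by case: (p x x) => a b /= /andP[/eqP ->].
Qed.

Lemma ipnorm2_eq0 x : N x = 0 -> x = 0.
Proof. by case: ipP => _ _ _ h N0; apply: h; rewrite ip_diag N0. Qed.

Lemma ipnorm2_0 : N 0 = 0.
Proof. by rewrite /ipnorm2 ip0l. Qed.

Lemma ip_ext x y : (forall z, p x z = p y z) -> x = y.
Proof.
move=> h; apply/eqP; rewrite -subr_eq0; apply/eqP/ipnorm2_eq0.
by rewrite /ipnorm2 ipBl h subrr.
Qed.

Lemma ipnorm2_addZ x y (t : R[i]) :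
  N (x + t *: y) = N x + 2 * Re (conjc t * p x y) + normc2 t * N y.
Proof.
rewrite /ipnorm2 ipDl !ipDr ipZl !ipZr ipZl (ipC x y) -!/(ipnorm2 p _).
rewrite !ip_diag; case: t => a b; case: (p x y) => c d; rewrite /normc2 /=; ring.
Qed.

Lemma ipnorm2Z (t : R[i]) x : N (t *: x) = normc2 t * N x.
Proof.
rewrite /ipnorm2 ipZl ipZr ip_diag.
by case: t => a b; rewrite /normc2 /=; ring.
Qed.

Lemma ipnorm2N x : N (- x) = N x.
Proof. by rewrite -scaleN1r ipnorm2Z /normc2 /=; ring. Qed.

Lemma parallelogram x y : N (x + y) + N (x - y) = 2 * N x + 2 * N y.
Proof.
have := ipnorm2_addZ x y 1; have := ipnorm2_addZ x y (-1).
rewrite scale1r scaleN1r /normc2 /= => -> ->.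
case: (p x y) => a b /=; ring.
Qed.

Lemma ipnorm2D_le x y : N (x + y) <= 2 * N x + 2 * N y.
Proof. by rewrite -parallelogram lerDl ipnorm2_ge0. Qed.

Lemma cauchy_schwarz x y : normc2 (p x y) <= N x * N y.
Proof.
apply: le_of_quadratic_ge0 => [||s]; rewrite ?normc2_ge0 ?ipnorm2_ge0 //.
have := ipnorm2_ge0 (x + (- (s%:C * p x y)) *: y); rewrite ipnorm2_addZ.
by case: (p x y) => c d; rewrite /normc2 /=; lra.
Qed.

(* If r is a [delta]-almost minimizer of the norm on the line r + C y, then
   r is almost orthogonal to y; [delta = 0] is the variational characterisation
   of orthogonal projections. *)
Lemma ip_small_of_almost_min r y (delta : R) :
  (forall s : R[i], N r <= N (r + s *: y) + delta) ->
  normc2 (p r y) <= delta * (N y + 1).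
Proof.
move=> almost_min; set b := p r y; set Q := N y; set t := (Q + 1)^-1.
have Q0 : 0 <= Q := ipnorm2_ge0 y.
have tQ : t * (Q + 1) = 1 by rewrite mulVf //; lra.
have t0 : 0 < t by rewrite invr_gt0; lra.
have := almost_min (- (t%:C * b)); rewrite ipnorm2_addZ -/b -/Q.
have -> : Re (conjc (- (t%:C * b)) * b) = - t * normc2 b.
  by case: b => c d; rewrite /normc2 /=; ring.
have -> : normc2 (- (t%:C * b)) = t ^+ 2 * normc2 b.
  by case: b => c d; rewrite /normc2 /=; ring.
have := normc2_ge0 b; set nb := normc2 b => nb0.
have tQ' : t * Q = 1 - t by rewrite -tQ; ring.
have -> : t ^+ 2 * nb * Q = nb * t * (t * Q) by ring.
rewrite tQ' => h.
have : nb * t <= delta by have := mulr_ge0 nb0 (sqr_ge0 t); lra.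
have Q1 : 0 <= Q + 1 by lra.
by move/(ler_wpM2r Q1); rewrite -mulrA tQ mulr1.
Qed.

End InnerProduct.

Lemma exists_invS_lt (R : realType) (e : R) : 0 < e -> exists M, M.+1%:R^-1 < e.
Proof. by move=> /ltr_add_invr[k]; rewrite add0r; exists k. Qed.

Lemma invS_le (R : realType) (M n : nat) : (M <= n)%N -> n.+1%:R^-1 <= M.+1%:R^-1 :> R.
Proof. by move=> h; rewrite lef_pV2 ?posrE ?ltr0Sn // ler_nat ltnS. Qed.

Lemma normc2_eps0 (R : realType) (z : R[i]) :
  (forall e, 0 < e -> normc2 z <= e) -> z = 0.
Proof.
move=> h; apply: normc2_eq0; apply/le_anti; rewrite normc2_ge0 andbT.
by apply/ler_addgt0Pr => e /h; rewrite add0r.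
Qed.

Section Sequences.
Variables (R : realType) (W : lmodType R[i]) (p : W -> W -> R[i]).
Local Notation N := (ipnorm2 p).

Definition ip_cvg (u : nat -> W) (l : W) :=
  forall e : R, 0 < e -> exists M, forall n, (M <= n)%N -> N (u n - l) <= e.

Definition ip_cauchy (u : nat -> W) :=
  forall e : R, 0 < e -> exists M, forall m n, (M <= m)%N -> (M <= n)%N ->
    N (u m - u n) <= e.

Definition ip_complete := forall u, ip_cauchy u -> exists l, ip_cvg u l.

Definition cvgc (z : nat -> R[i]) (w : R[i]) :=
  forall e : R, 0 < e -> exists M, forall n, (M <= n)%N -> normc2 (z n - w) <= e.

Lemma hilbert_complete : hilbert_space p -> ip_complete.
Proof.
case=> _ complete u u_cauchy; have [|l ul] := complete u.
  move=> e e0; have e20 : 0 < e ^+ 2 / 2 by rewrite divr_gt0 ?exprn_gt0.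
  have [M hM] := u_cauchy _ e20; exists M => m n hm hn.
  rewrite /ipnorm -(gtr0_norm e0) -sqrtr_sqr ltr_sqrt ?exprn_gt0 //.
  by apply: le_lt_trans (hM m n hm hn) _; rewrite gtr_pMr ?exprn_gt0 // invf_lt1 ?ltr1n.
exists l => e e0; have [M hM] : exists M, forall n, (M <= n)%N -> ipnorm p (u n - l) < Num.sqrt e.
  by apply: ul; rewrite sqrtr_gt0.
by exists M => n /hM; rewrite /ipnorm ltr_sqrt // => /ltW.
Qed.

Lemma ip_cauchy_of_invS_bound (v : nat -> W) (C : R) : 0 <= C ->
  (forall m n, N (v m - v n) <= C * (m.+1%:R^-1 + n.+1%:R^-1)) -> ip_cauchy v.
Proof.
move=> C0 bound e e0.
have eC : 0 < e / (2 * C + 1) by apply: divr_gt0 => //; lra.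
have [M hM] := exists_invS_lt eC.
exists M => m n /(invS_le R) hm /(invS_le R) hn; apply: le_trans (bound m n) _.
have M0 : 0 < M.+1%:R^-1 :> R by rewrite invr_gt0.
rewrite ltr_pdivlMr in hM; last by lra.
have := ler_wpM2l C0 (lerD hm hn); move: M0 hM.
set a := M.+1%:R^-1; set b := m.+1%:R^-1; set c := n.+1%:R^-1; lra.
Qed.

Lemma ip_cvg_eq (u v : nat -> W) l : (forall n, u n = v n) -> ip_cvg u l -> ip_cvg v l.
Proof. by move=> uv ul e /ul[M hM]; exists M => n /hM; rewrite uv. Qed.

Lemma cvgc_unique (z : nat -> R[i]) w1 w2 : cvgc z w1 -> cvgc z w2 -> w1 = w2.
Proof.
move=> zw1 zw2; apply/eqP; rewrite -subr_eq0; apply/eqP/normc2_eps0 => e e0.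
have [M1 h1] := zw1 _ (divr_gt0 e0 (ltr0n _ 4)).
have [M2 h2] := zw2 _ (divr_gt0 e0 (ltr0n _ 4)).
set n := maxn M1 M2; have := h1 n (leq_maxl _ _); have := h2 n (leq_maxr _ _).
have := normc2D_le (w1 - z n) (z n - w2); rewrite addrA subrK.
rewrite -(normc2N (z n - w1)) opprB; lra.
Qed.

Lemma cvgc_invS_bound (z : nat -> R[i]) (C : R) : 0 <= C ->
  (forall n, normc2 (z n) <= C * n.+1%:R^-1) -> cvgc z 0.
Proof.
move=> C0 bound e e0.
have eC : 0 < e / (C + 1) by apply: divr_gt0 => //; lra.
have [M hM] := exists_invS_lt eC.
exists M => n /(invS_le R) hn; rewrite subr0; apply: le_trans (bound n) _.
rewrite ltr_pdivlMr in hM; last by lra.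
have : 0 < n.+1%:R^-1 :> R by rewrite invr_gt0.
move: hn hM; set a := M.+1%:R^-1; set b := n.+1%:R^-1.
nra.
Qed.

Hypothesis ipP : inner_product p.

Lemma ip_cvgD (u v : nat -> W) lu lv : ip_cvg u lu -> ip_cvg v lv ->
  ip_cvg (fun n => u n + v n) (lu + lv).
Proof.
move=> ul vl e e0; have e4 : 0 < e / 4%:R by rewrite divr_gt0.
have [M1 h1] := ul _ e4; have [M2 h2] := vl _ e4.
exists (maxn M1 M2) => n; rewrite geq_max => /andP[/h1 hu /h2 hv].
rewrite opprD addrACA; apply: le_trans (ipnorm2D_le ipP _ _) _; lra.
Qed.

Lemma ip_cvgZ (u : nat -> W) l (c : R[i]) : ip_cvg u l ->
  ip_cvg (fun n => c *: u n) (c *: l).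
Proof.
move=> ul e e0; have c0 := normc2_ge0 c.
have ec : 0 < e / (normc2 c + 1) by apply: divr_gt0 => //; lra.
have [M hM] := ul _ ec.
exists M => n /hM; rewrite -scalerBr ipnorm2Z // ler_pdivlMr; last by lra.
have := ipnorm2_ge0 ipP (u n - l); nra.
Qed.

Lemma ip_cvgB (u v : nat -> W) lu lv : ip_cvg u lu -> ip_cvg v lv ->
  ip_cvg (fun n => u n - v n) (lu - lv).
Proof.
move=> ul /(ip_cvgZ (-1)) vl; rewrite -scaleN1r.
by apply: ip_cvg_eq (ip_cvgD ul vl) => n; rewrite scaleN1r.
Qed.

Lemma cvgc_ipr (u : nat -> W) l z : ip_cvg u l -> cvgc (fun n => p z (u n)) (p z l).
Proof.
move=> ul e e0; have z0 := ipnorm2_ge0 ipP z.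
have ez : 0 < e / (N z + 1) by apply: divr_gt0 => //; lra.
have [M hM] := ul _ ez.
exists M => n /hM; rewrite -ipBr // ler_pdivlMr => [hn|]; last by lra.
apply: le_trans (cauchy_schwarz ipP _ _) _.
have := ipnorm2_ge0 ipP (u n - l); nra.
Qed.

Lemma cvgc_ipl (u : nat -> W) l z : ip_cvg u l -> cvgc (fun n => p (u n) z) (p l z).
Proof.
move=> /(cvgc_ipr z) ul e /ul[M hM]; exists M => n /hM.
by rewrite !(ipC ipP _ z) -conjcN -conjcD normc2J.
Qed.

End Sequences.

Section SubspaceLinear.
Variables (R : realType) (W : lmodType R[i]) (D : W -> Prop) (A : W -> W).
Hypotheses (subD : subspace D) (linA : linear_on D A).

Lemma subspace0 : D 0.
Proof. by case: subD. Qed.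

Lemma subspaceZ a x : D x -> D (a *: x).
Proof. by case: subD => D0 DL Dx; rewrite -[_ *: _]addr0; apply: DL. Qed.

Lemma subspaceD x y : D x -> D y -> D (x + y).
Proof. by case: subD => _ DL Dx Dy; rewrite -[x]scale1r; apply: DL. Qed.

Lemma subspaceB x y : D x -> D y -> D (x - y).
Proof. by move=> Dx Dy; rewrite -scaleN1r; apply/subspaceD/subspaceZ. Qed.

Lemma linear_on0 : A 0 = 0.
Proof.
have := linA 1 subspace0 subspace0; rewrite scale1r addr0 scale1r => h.
by apply: (addrI (A 0)); rewrite addr0 -h.
Qed.

Lemma linear_onZ a x : D x -> A (a *: x) = a *: A x.
Proof.
by move=> Dx; rewrite -[_ *: x]addr0 linA ?linear_on0 ?addr0 //; apply: subspace0.
Qed.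

Lemma linear_onD x y : D x -> D y -> A (x + y) = A x + A y.
Proof. by move=> Dx Dy; have := linA 1 Dx Dy; rewrite !scale1r. Qed.

Lemma linear_onB x y : D x -> D y -> A (x - y) = A x - A y.
Proof.
move=> Dx Dy; have DNy : D ((-1) *: y) by apply: subspaceZ.
by rewrite -scaleN1r linear_onD // linear_onZ // scaleN1r.
Qed.

End SubspaceLinear.

Section ClosedRange.
Variables (R : realType) (W : lmodType R[i]) (p : W -> W -> R[i]).
Hypotheses (ipP : inner_product p) (complete : ip_complete p).
Variables (E : W -> Prop) (K : W -> W) (c : R).
Hypotheses (subE : subspace E) (linK : linear_on E K) (c0 : 0 <= c).
Hypothesis K_bounded_below : forall u, E u -> ipnorm2 p u <= c * ipnorm2 p (K u).
Hypothesis K_closed : forall (u : nat -> W) l g, (forall n, E (u n)) ->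
  ip_cvg p u l -> ip_cvg p (fun n => K (u n)) g -> E l /\ K l = g.
Hypothesis K_range_dense : forall g, (forall v, E v -> p (K v) g = 0) -> g = 0.
Variable f : W.
Local Notation N := (ipnorm2 p).
Local Open Scope classical_set_scope.

Let dist2 := inf [set N (f - K u) | u in E].

Let dist2_has_inf : has_inf [set N (f - K u) | u in E].
Proof.
split; first by exists (N (f - K 0)), 0; first exact: subspace0.
by exists 0 => _ [u _ <-]; apply: ipnorm2_ge0.
Qed.

Lemma dist2_le u : E u -> dist2 <= N (f - K u).
Proof. by move=> Eu; apply: (ge_inf dist2_has_inf.2); exists u. Qed.

Lemma exists_near_minimizer n :
  exists u, E u /\ N (f - K u) < dist2 + n.+1%:R^-1.
Proof.
have n0 : 0 < n.+1%:R^-1 :> R by rewrite invr_gt0.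
by have [_ [u Eu <-]] := inf_adherent n0 dist2_has_inf; exists u.
Qed.

Section MinimizingSequence.
Variable u : nat -> W.
Hypothesis Eu : forall n, E (u n).
Hypothesis u_min : forall n, N (f - K (u n)) < dist2 + n.+1%:R^-1.

(* The midpoint of u m and u n is admissible, so the parallelogram law bounds
   the distance between K (u m) and K (u n). *)
Lemma minimizing_image_close m n :
  N (K (u m) - K (u n)) <= 2 * (m.+1%:R^-1 + n.+1%:R^-1).
Proof.
set x := f - K (u n); set y := f - K (u m).
set w := (2%:R : R[i])^-1 *: (u n + u m).
have Ew : E w by apply/(subspaceZ subE)/(subspaceD subE).
have xy : x + y = (2%:R : R[i]) *: (f - K w).
  rewrite (linear_onZ subE linK); last exact: (subspaceD subE).
  rewrite (linear_onD linK) //.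
  rewrite scalerBr scalerA mulfV ?pnatr_eq0 // scale1r scaler_nat mulr2n.
  by rewrite /x /y opprD addrACA.
have := parallelogram ipP x y; rewrite xy ipnorm2Z // (_ : x - y = K (u m) - K (u n)).
  have := dist2_le Ew; have := u_min n; have := u_min m; rewrite -/x -/y /normc2 /=.
  set a := m.+1%:R^-1; set b := n.+1%:R^-1; lra.
by rewrite /x /y opprB addrC addrA subrK.
Qed.

Lemma minimizing_image_cauchy : ip_cauchy p (fun n => K (u n)).
Proof. exact: (ip_cauchy_of_invS_bound (ler0n R 2) minimizing_image_close). Qed.

Lemma minimizing_cauchy : ip_cauchy p u.
Proof.
have c2 : 0 <= c * 2 by rewrite mulr_ge0.
apply: (ip_cauchy_of_invS_bound c2) => m n.
apply: le_trans (K_bounded_below (subspaceB subE (Eu m) (Eu n))) _.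
by rewrite (linear_onB subE linK) // -mulrA ler_wpM2l // minimizing_image_close.
Qed.

Lemma minimizing_residual_orth n v : E v ->
  normc2 (p (f - K (u n)) (K v)) <= (N (K v) + 1) * n.+1%:R^-1.
Proof.
move=> Ev; rewrite mulrC; apply: ip_small_of_almost_min => // s.
have Esv : E (s *: v) by apply: subspaceZ.
have := dist2_le (subspaceB subE (Eu n) Esv).
rewrite (linear_onB subE linK) // (linear_onZ subE linK) // opprB addrA addrAC.
by have := u_min n; set a := n.+1%:R^-1; lra.
Qed.

End MinimizingSequence.

Lemma closed_range_surj : exists u, E u /\ K u = f.
Proof.
have [u /all_and2[Eu u_min]] := choice exists_near_minimizer.
have [l ul] := complete (minimizing_cauchy Eu u_min).
have [g Kug] := complete (minimizing_image_cauchy Eu u_min).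
have [El Klg] := K_closed Eu ul Kug.
exists l; split => //; rewrite Klg; apply/esym/subr0_eq/K_range_dense => v Ev.
rewrite (ipC ipP) (_ : p (f - g) (K v) = 0) ?conjc0 //.
have residual_cvg : ip_cvg p (fun n => f - K (u n)) (f - g).
  move=> e /Kug[M hM]; exists M => n /hM.
  have -> : f - K (u n) - (f - g) = - (K (u n) - g).
    by rewrite opprB addrC addrA subrK opprB.
  by rewrite ipnorm2N.
apply: (cvgc_unique (cvgc_ipl ipP (K v) residual_cvg)).
have Kv1 : 0 <= N (K v) + 1 by have := ipnorm2_ge0 ipP (K v); lra.
exact: (cvgc_invS_bound Kv1 (fun n => minimizing_residual_orth Eu u_min n Ev)).
Qed.

End ClosedRange.

Lemma resolvent_of_bounded_below_onto (R : realType) (W : lmodType R[i])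
    (p : W -> W -> R[i]) (D : W -> Prop) (S : W -> W) (lam : R[i]) (c : R) :
  inner_product p -> subspace D -> linear_on D (fun u => S u - lam *: u) ->
  0 <= c -> (forall u, D u -> ipnorm2 p u <= c * ipnorm2 p (S u - lam *: u)) ->
  (forall f, exists u, D u /\ S u - lam *: u = f) -> resolvent p D S lam.
Proof.
move=> ipP subD linK c0 bounded onto.
have [Rs /all_and2[DRs RsK]] := choice onto.
exists Rs; split=> [f|u Du|]; first by [].
- have := linear_onB subD linK (DRs (S u - lam *: u)) Du; rewrite /= RsK subrr => K0.
  apply/eqP; rewrite -subr_eq0; apply/eqP/(ipnorm2_eq0 ipP)/le_anti.
  rewrite ipnorm2_ge0 // andbT; apply: le_trans (bounded _ (subspaceB subD (DRs _) Du)) _.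
  by rewrite K0 ipnorm2_0 // mulr0.
- exists (Num.sqrt c) => f; rewrite /ipnorm -sqrtrM //; apply: ler_wsqrtr.
  by have := bounded _ (DRs f); rewrite RsK.
Qed.

Section ProductSpace.
Variables (R : realType) (V : lmodType R[i]) (ip : V -> V -> R[i]).
Hypothesis ipP : inner_product ip.
Local Notation N := (ipnorm2 ip).

Lemma ipnorm2_prod (u : V * V) : ipnorm2 (ip_prod ip) u = N u.1 + N u.2.
Proof. exact: ReD. Qed.

Lemma ip_prod_inner : inner_product (ip_prod ip).
Proof.
split=> [a x y z|x y|x|[x1 x2]]; rewrite /ip_prod.
- by rewrite /= !(ipDl ipP) !(ipZl ipP); ring.
- by rewrite !(ipC ipP x.1) !(ipC ipP x.2) conjcD.
- by rewrite !(ip_diag ipP) addr_ge0 // ler0c ipnorm2_ge0.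
rewrite /= !(ip_diag ipP) -rmorphD => /(congr1 (@complex.Re R)) /= N0.
have := ipnorm2_ge0 ipP x1; have := ipnorm2_ge0 ipP x2 => N2 N1.
have N1_0 : N x1 = 0 by lra.
have N2_0 : N x2 = 0 by lra.
by rewrite (ipnorm2_eq0 ipP N1_0) (ipnorm2_eq0 ipP N2_0).
Qed.

Lemma dom_prod_subspace (D : V -> Prop) : subspace D -> subspace (dom_prod D).
Proof.
move=> subD; split; first by split; apply: subspace0.
by move=> a x y [Dx1 Dx2] [Dy1 Dy2]; case: subD => _ DL; split; apply: DL.
Qed.

Lemma ip_cvg_fst (u : nat -> V * V) l :
  ip_cvg (ip_prod ip) u l -> ip_cvg ip (fun n => (u n).1) l.1.
Proof.
move=> ul e /ul[M hM]; exists M => n /hM; rewrite ipnorm2_prod /=.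
by have := ipnorm2_ge0 ipP ((u n).2 - l.2); lra.
Qed.

Lemma ip_cvg_snd (u : nat -> V * V) l :
  ip_cvg (ip_prod ip) u l -> ip_cvg ip (fun n => (u n).2) l.2.
Proof.
move=> ul e /ul[M hM]; exists M => n /hM; rewrite ipnorm2_prod /=.
by have := ipnorm2_ge0 ipP ((u n).1 - l.1); lra.
Qed.

Lemma ip_prod_complete : ip_complete ip -> ip_complete (ip_prod ip).
Proof.
move=> complete u u_cauchy.
have component_cauchy (proj : V * V -> V) :
    (forall x, N (proj x) <= ipnorm2 (ip_prod ip) x) ->
    (forall x y, proj (x - y) = proj x - proj y) ->
    ip_cauchy ip (fun n => proj (u n)).
  move=> proj_le projB e /u_cauchy[M hM]; exists M => m n hm hn.
  by rewrite -projB; apply: le_trans (proj_le _) (hM m n hm hn).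
have fst_le x : N x.1 <= ipnorm2 (ip_prod ip) x.
  by rewrite ipnorm2_prod lerDl ipnorm2_ge0.
have snd_le x : N x.2 <= ipnorm2 (ip_prod ip) x.
  by rewrite ipnorm2_prod lerDr ipnorm2_ge0.
have [l1 ul1] := complete _ (component_cauchy fst fst_le (fun _ _ => erefl)).
have [l2 ul2] := complete _ (component_cauchy snd snd_le (fun _ _ => erefl)).
exists (l1, l2) => e e0; have e2 : 0 < e / 2 by rewrite divr_gt0.
have [M1 hM1] := ul1 _ e2; have [M2 hM2] := ul2 _ e2.
exists (maxn M1 M2) => n; rewrite geq_max => /andP[/hM1 h1 /hM2 h2].
by rewrite ipnorm2_prod /=; lra.
Qed.

End ProductSpace.

Section SelfAdjoint.
Variables (R : realType) (V : lmodType R[i]) (ip : V -> V -> R[i]).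
Variables (D : V -> Prop) (A : V -> V).
Hypotheses (ipP : inner_product ip) (saA : self_adjoint ip D A).

Lemma self_adjoint_linear : linear_on D A.
Proof. by case: saA. Qed.

Lemma self_adjoint_sym x y : D x -> D y -> ip (A x) y = ip x (A y).
Proof.
case: saA => _ dom_adj adj_eq Dx Dy.
by have [z Az] := (dom_adj y).1 Dy; rewrite (adj_eq y z Dy Az) Az.
Qed.

Lemma self_adjoint_Im x : D x -> Im (ip (A x) x) = 0.
Proof.
move=> Dx; have := self_adjoint_sym Dx Dx; rewrite (ipC ipP (A x) x).
by case: (ip (A x) x) => a b /= [] ?; lra.
Qed.

Lemma self_adjoint_closed (x : nat -> V) l y : (forall n, D (x n)) ->
  ip_cvg ip x l -> ip_cvg ip (fun n => A (x n)) y -> D l /\ A l = y.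
Proof.
move=> Dx xl Axy.
have adj z : D z -> ip (A z) l = ip z y.
  move=> Dz; apply: (cvgc_unique (cvgc_ipr ipP (A z) xl)).
  have -> : (fun n => ip (A z) (x n)) = (fun n => ip z (A (x n))).
    by apply: funext => n; apply: self_adjoint_sym.
  exact: cvgc_ipr.
case: saA => _ dom_adj adj_eq.
have Dl : D l by apply/dom_adj; exists y.
by split; last exact: adj_eq.
Qed.

End SelfAdjoint.

Section BlockOperator.
Variables (R : realType) (V : lmodType R[i]) (ip : V -> V -> R[i]).
Variables (D : V -> Prop) (A B : V -> V) (alpha : R) (lam : R[i]).
Hypotheses (ipP : inner_product ip) (subD : subspace D).
Hypotheses (saA : self_adjoint ip D A) (saB : self_adjoint ip D B).
Local Notation a := (alpha%:C).
Local Notation N := (ipnorm2 ip).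
Local Notation Np := (ipnorm2 (ip_prod ip)).
Local Notation k := (1 + a ^+ 2).

Definition Tshift (u : V * V) : V * V := Tblock A B alpha u - lam *: u.

Lemma Tshift_linear : linear_on (dom_prod D) Tshift.
Proof.
move=> c x y [Dx1 Dx2] [Dy1 Dy2].
have linA := self_adjoint_linear saA; have linB := self_adjoint_linear saB.
rewrite [LHS]surjective_pairing [RHS]surjective_pairing /= linA // linB //.
by congr (_, _); apply: (ip_ext ipP) => z; rewrite !(ipE ipP); ring.
Qed.

Lemma sqr_alpha1_neq0 : k != 0.
Proof.
apply/eqP => /(congr1 (@complex.Re R)) /=.
by rewrite !mul0r subr0 => h; have := sqr_ge0 alpha; rewrite expr2; lra.
Qed.

(* The block matrix factors as [[1, alpha], [-alpha, 1]] times diag(A, B), and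
   [[1, -alpha], [alpha, 1]] inverts the first factor up to 1 + alpha^2. *)
Lemma Tshift_fst_recover u :
  k *: A u.1 = (Tshift u).1 - a *: (Tshift u).2 + lam *: (u.1 - a *: u.2).
Proof. by apply: (ip_ext ipP) => z; rewrite /= !(ipE ipP); ring. Qed.

Lemma Tshift_snd_recover u :
  k *: B u.2 = a *: (Tshift u).1 + (Tshift u).2 + lam *: (a *: u.1 + u.2).
Proof. by apply: (ip_ext ipP) => z; rewrite /= !(ipE ipP); ring. Qed.

Lemma Tshift_closed (u : nat -> V * V) l g : (forall n, dom_prod D (u n)) ->
  ip_cvg (ip_prod ip) u l -> ip_cvg (ip_prod ip) (fun n => Tshift (u n)) g ->
  dom_prod D l /\ Tshift l = g.
Proof.
move=> Du ul Tug; have k0 := sqr_alpha1_neq0.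
have [ul1 ul2] := (ip_cvg_fst ipP ul, ip_cvg_snd ipP ul).
have [Tug1 Tug2] := (ip_cvg_fst ipP Tug, ip_cvg_snd ipP Tug).
have unscale (x : V) : k^-1 *: (k *: x) = x by rewrite scalerA mulVf // scale1r.
have cvgA : ip_cvg ip (fun n => A (u n).1)
    (k^-1 *: (g.1 - a *: g.2 + lam *: (l.1 - a *: l.2))).
  apply: (ip_cvg_eq _ (ip_cvgZ ipP k^-1 (ip_cvgD ipP
    (ip_cvgB ipP Tug1 (ip_cvgZ ipP a Tug2))
    (ip_cvgZ ipP lam (ip_cvgB ipP ul1 (ip_cvgZ ipP a ul2)))))) => n.
  by rewrite -Tshift_fst_recover unscale.
have cvgB : ip_cvg ip (fun n => B (u n).2)
    (k^-1 *: (a *: g.1 + g.2 + lam *: (a *: l.1 + l.2))).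
  apply: (ip_cvg_eq _ (ip_cvgZ ipP k^-1 (ip_cvgD ipP
    (ip_cvgD ipP (ip_cvgZ ipP a Tug1) Tug2)
    (ip_cvgZ ipP lam (ip_cvgD ipP (ip_cvgZ ipP a ul1) ul2))))) => n.
  by rewrite -Tshift_snd_recover unscale.
have [Dl1 Al1] := self_adjoint_closed ipP saA (fun n => (Du n).1) ul1 cvgA.
have [Dl2 Bl2] := self_adjoint_closed ipP saB (fun n => (Du n).2) ul2 cvgB.
split=> //; rewrite [LHS]surjective_pairing [RHS]surjective_pairing /= Al1 Bl2.
by congr (_, _); apply: (ip_ext ipP) => z; rewrite !(ipE ipP); field.
Qed.

Let twist (u : V * V) : V * V := (u.1 + a *: u.2, u.2 - a *: u.1).

Lemma ipnorm2_twist u : Np (twist u) = (1 + alpha ^+ 2) * Np u.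
Proof.
rewrite !ipnorm2_prod /= -scaleNr !(ipnorm2_addZ ipP) (ipC ipP u.1 u.2).
by case: (ip u.1 u.2) => c d; rewrite /normc2 /=; ring.
Qed.

Hypothesis Re_lam : Re lam = 0.

(* Self-adjointness makes the diagonal terms real, and for purely imaginary
   [lam] the cross term [a lam (ip u1 u2 - ip u2 u1)] is real as well. *)
Lemma Im_ip_Tshift_twist u : dom_prod D u ->
  Im (ip_prod ip (Tshift u) (twist u)) = - Im lam * Np u.
Proof.
case: u => u1 u2 [/= Du1 Du2].
have -> : ip_prod ip (Tshift (u1, u2)) (twist (u1, u2)) =
    k * (ip (A u1) u1 + ip (B u2) u2) - lam * ((N u1)%:C + (N u2)%:C)
    - a * lam * (ip u1 u2 - conjc (ip u1 u2)).
  rewrite /ip_prod /= !(ipE ipP) conjc_real !(ip_diag ipP) (ipC ipP u1 u2); ring.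
rewrite ipnorm2_prod /=.
move: (self_adjoint_Im ipP saA Du1) (self_adjoint_Im ipP saB Du2) Re_lam.
case: (ip (A u1) u1) => ? ?; case: (ip (B u2) u2) => ? ?; case: (ip u1 u2) => ? ?.
by case: lam => ? ? /= -> -> ->; ring.
Qed.

Hypothesis lam_neq0 : lam != 0.

Lemma Im_lam_neq0 : Im lam != 0.
Proof.
move: lam_neq0 Re_lam; case: lam => re im /= + re0; rewrite re0.
by apply: contraNneq => ->.
Qed.

Lemma Tshift_bounded_below u : dom_prod D u ->
  Np u <= (1 + alpha ^+ 2) / Im lam ^+ 2 * Np (Tshift u).
Proof.
move=> Du; have cs := cauchy_schwarz (ip_prod_inner ipP) (Tshift u) (twist u).
have := sqr_Im_le_normc2 (ip_prod ip (Tshift u) (twist u)).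
rewrite Im_ip_Tshift_twist // ipnorm2_twist in cs *.
have mu2 : 0 < Im lam ^+ 2 by rewrite exprn_even_gt0 // Im_lam_neq0.
have := ipnorm2_ge0 (ip_prod_inner ipP) u; have := ipnorm2_ge0 (ip_prod_inner ipP) (Tshift u).
have k1 : 0 < 1 + alpha ^+ 2 by have := sqr_ge0 alpha; lra.
set x := Np u; set y := Np (Tshift u); set mu := Im lam => y0 x0 Im_le.
rewrite mulrAC ler_pdivlMr //.
have [->|xneq0] := eqVneq x 0; first by rewrite mul0r mulr_ge0 // ltW.
have xpos : 0 < x by rewrite lt_def xneq0.
rewrite -/x -/y in cs; rewrite -(ler_pM2l xpos).
have -> : x * (x * mu ^+ 2) = (- mu * x) ^+ 2 by ring.
have -> : x * ((1 + alpha ^+ 2) * y) = y * ((1 + alpha ^+ 2) * x) by ring.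
exact: le_trans cs.
Qed.

(* Testing orthogonality against (x, 0) and (0, y) puts g1 - a g2 and
   a g1 + g2 in the domains of the adjoints of A and B. *)
Lemma Tshift_range_dense g :
  (forall v, dom_prod D v -> ip_prod ip (Tshift v) g = 0) -> g = 0.
Proof.
case: g => g1 g2 orth; have D0 := subspace0 subD.
have A0 := linear_on0 subD (self_adjoint_linear saA).
have B0 := linear_on0 subD (self_adjoint_linear saB).
have adjA x : D x -> ip (A x) (g1 - a *: g2) = ip x (conjc lam *: g1).
  move=> Dx; apply/eqP; rewrite -subr_eq0 -(orth (x, 0) (conj Dx D0)); apply/eqP.
  by rewrite /ip_prod /= B0 !(ipE ipP) conjc_real conjcK; ring.
have adjB y : D y -> ip (B y) (a *: g1 + g2) = ip y (conjc lam *: g2).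
  move=> Dy; apply/eqP; rewrite -subr_eq0 -(orth (0, y) (conj D0 Dy)); apply/eqP.
  by rewrite /ip_prod /= A0 !(ipE ipP) conjc_real conjcK; ring.
have [_ domA eqA] := saA; have [_ domB eqB] := saB.
have Dh1 : D (g1 - a *: g2) by apply/domA; exists (conjc lam *: g1).
have Dh2 : D (a *: g1 + g2) by apply/domB; exists (conjc lam *: g2).
have := self_adjoint_Im ipP saA Dh1; rewrite (eqA _ _ Dh1 adjA).
have := self_adjoint_Im ipP saB Dh2; rewrite (eqB _ _ Dh2 adjB).
rewrite !(ipE ipP) conjc_real (ipC ipP g1 g2) !(ip_diag ipP) => ImB ImA.
have : Im lam * (N g1 + N g2) = 0.
  move: ImA ImB Re_lam; case: (ip g1 g2) => ? ?; case: lam => re ? /= ? ? re0.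
  by subst re; lra.
move/eqP; rewrite mulf_eq0 (negbTE Im_lam_neq0) /= => /eqP N0.
have := ipnorm2_ge0 ipP g1; have := ipnorm2_ge0 ipP g2 => N2 N1.
have N1_0 : N g1 = 0 by lra.
have N2_0 : N g2 = 0 by lra.
by rewrite (ipnorm2_eq0 ipP N1_0) (ipnorm2_eq0 ipP N2_0).
Qed.

End BlockOperator.

Theorem lemma15 (R : realType) (V : lmodType R[i]) (ip : V -> V -> R[i])
  (D : V -> Prop) (A B : V -> V) (alpha : R) :
  hilbert_space ip -> subspace D -> dense ip D ->
  self_adjoint ip D A -> self_adjoint ip D B ->
  forall lam : R[i],
    spectrum (ip_prod ip) (dom_prod D) (Tblock A B alpha) lam ->
    complex.Re lam = 0 -> lam = 0.
Proof.
move=> hilbert subD _ saA saB lam spectral Re_lam; apply/eqP/contraT => lam_neq0.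
have ipP : inner_product ip by case: hilbert.
have [prodP subDD] := (ip_prod_inner ipP, dom_prod_subspace subD).
have completeP := ip_prod_complete ipP (hilbert_complete hilbert).
have linT := Tshift_linear alpha lam ipP saA saB.
have c0 : 0 <= (1 + alpha ^+ 2) / Im lam ^+ 2 by rewrite divr_ge0 ?addr_ge0 ?sqr_ge0.
have bound := Tshift_bounded_below alpha ipP saA saB Re_lam lam_neq0.
case: spectral; apply: (resolvent_of_bounded_below_onto prodP subDD linT c0 bound).
apply: (closed_range_surj prodP completeP subDD linT c0 bound).
- exact: Tshift_closed.
- exact: Tshift_range_dense.
Qed.
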